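(* Consider the two-layer multi-item order fulfillment problem described in the context with a single FDC ($K=1$), fixed costs $f_0,f_1>0$, and time-invariant variable costs $c_{k,t}^i\equiv c_k^i$. Let $w=f_0/f_1$. Let \textsc{Randomized-Cost-Comparison V-Priority} be the following randomized policy. In each period $t$, for each item $i$, set $\hat m_{1,t}^i=\min\{S_t^i,I_{1,t-1}^i\}$ if $c_1^i<c_0^i$ and $\hat m_{1,t}^i=0$ otherwise, and $\hat m_{0,t}^i=S_t^i-\hat m_{1,t}^i$. Let $x_t=\sum_{i=1}^n(c_0^i-c_1^i)\hat m_{1,t}^i$ and draw, independently of everything else, $\theta_t\sim\mathrm{Bernoulli}(p(x_t))$, where \[p(x)=\begin{cases}1,& x\le f_1,\\ \dfrac{f_1^2-(f_0+x)f_0}{f_1^2+(f_0+x)(x-f_1)},& f_1<x\le\max\{f_1,\ f_1^2/f_0-f_0\},\\ 0,& x>\max\{f_1,\ f_1^2/f_0-f_0\}.\end{cases}\] If $\theta_t=1$, fulfill the whole order from the RDC ($m_{0,t}^i=S_t^i$, $m_{1,t}^i=0$); otherwise set $m_{k,t}^i=\hat m_{k,t}^i$. Then \[\mathfrak R_{\mathrm{inv}}(\textsc{Randomized-Cost-Comparison V-Priority})\le\begin{cases}1+\dfrac{1}{1-w+2\sqrt{1-w}},& w<\frac{\sqrt5-1}{2},\\ 1+w,& w\ge\frac{\sqrt5-1}{2}.\end{cases}\]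
   Context: Problem with one FDC (index $1$) and one RDC (index $0$, unlimited inventory). The FDC initially holds $I_{1,0}^i\ge0$ units of item $i\in[n]$, never replenished. In periods $t=1,\dots,T$ an order $\boldsymbol S_t=(S_t^i)_i$ of nonnegative integers arrives; the policy must immediately and irrevocably choose $m_{0,t}^i,m_{1,t}^i\ge0$ with $m_{0,t}^i+m_{1,t}^i=S_t^i$ and $m_{1,t}^i\le I_{1,t-1}^i$, where $I_{1,t}^i=I_{1,0}^i-\sum_{\tau\le t}m_{1,\tau}^i$. Period cost $\sum_{k=0,1}[f_k\mathbb{I}(\sum_im_{k,t}^i>0)+\sum_ic_k^im_{k,t}^i]$; total cost is the sum. Online policies use only fixed costs, initial inventories, the (time-invariant) variable costs and orders up to the current period. $\mathrm{ALG}(I)$ is the expected total cost of the policy on instance $I$ and $\mathrm{OPT}(I)$ the offline optimal total cost. $\mathfrak R_{\mathrm{inv}}(\mathrm{ALG})$ is the supremum of $\mathrm{ALG}(I)/\mathrm{OPT}(I)$ over all $n,T$, initial inventories, nonnegative time-invariant variable costs $c_k^i$ and order sequences. *)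

From mathcomp Require Import all_boot all_order all_algebra.
From mathcomp Require Import reals.
Set Implicit Arguments. Unset Strict Implicit. Unset Printing Implicit Defensive.
Import Order.TTheory GRing.Theory Num.Theory.
Local Open Scope ring_scope.

(* Periods are indexed 0..T-1 (period t of the paper is index t-1).
   An order sequence is S : nat -> 'I_n -> nat (S t i = S_{t+1}^i).
   Index 0 = RDC, index 1 = the single FDC. *)

Definition period_cost (R : realType) (n : nat) (f0 f1 : R) (c0 c1 : 'I_n -> R)
    (m0 m1 : 'I_n -> nat) : R :=
  (if (0 < \sum_(i < n) m0 i)%N then f0 else 0) + \sum_(i < n) c0 i * (m0 i)%:R
  + ((if (0 < \sum_(i < n) m1 i)%N then f1 else 0) + \sum_(i < n) c1 i * (m1 i)%:R).

(* Offline plans: m1 t i units of item i shipped from the FDC in period t,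
   the rest S t i - m1 t i from the RDC. Feasibility: m_{1,t}^i <= S_t^i and
   m_{1,t}^i <= I_{1,t-1}^i = I_{1,0}^i - sum_{s<t} m_{1,s}^i. *)
Definition feasible_plan (n T : nat) (I0 : 'I_n -> nat) (S : nat -> 'I_n -> nat)
    (m1 : nat -> 'I_n -> nat) : Prop :=
  forall t i, (t < T)%N ->
    (m1 t i <= S t i)%N /\ (m1 t i + \sum_(s < t) m1 s i <= I0 i)%N.

Definition plan_cost (R : realType) (n T : nat) (f0 f1 : R) (c0 c1 : 'I_n -> R)
    (S : nat -> 'I_n -> nat) (m1 : nat -> 'I_n -> nat) : R :=
  \sum_(t < T) period_cost f0 f1 c0 c1 (fun i => (S t i - m1 t i)%N) (m1 t).

Definition p_rdc (R : realType) (f0 f1 x : R) : R :=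
  if x <= f1 then 1
  else if x <= Num.max f1 (f1 ^+ 2 / f0 - f0) then
    (f1 ^+ 2 - (f0 + x) * f0) / (f1 ^+ 2 + (f0 + x) * (x - f1))
  else 0.

(* Expected cost of Randomized-Cost-Comparison V-Priority over periods
   t, t+1, ..., t+k-1, when the FDC inventory at the start of period t is inv.
   theta_t ~ Bernoulli(p(x_t)) is drawn independently of everything else, so the
   expectation is computed by conditioning on theta_t (total expectation). *)
Fixpoint rcc_exp_cost (R : realType) (n : nat) (f0 f1 : R) (c0 c1 : 'I_n -> R)
    (S : nat -> 'I_n -> nat) (k t : nat) (inv : 'I_n -> nat) : R :=
  match k with
  | 0 => 0
  | k'.+1 =>
    let mh1 := fun i => if c1 i < c0 i then minn (S t i) (inv i) else 0%N in
    let mh0 := fun i => (S t i - mh1 i)%N in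
    let x := \sum_(i < n) (c0 i - c1 i) * (mh1 i)%:R in
    let q := p_rdc f0 f1 x in
    q * (period_cost f0 f1 c0 c1 (S t) (fun _ => 0%N)
         + rcc_exp_cost f0 f1 c0 c1 S k' t.+1 inv)
    + (1 - q) * (period_cost f0 f1 c0 c1 mh0 mh1
         + rcc_exp_cost f0 f1 c0 c1 S k' t.+1 (fun i => (inv i - mh1 i)%N))
  end.

Definition rcc_alg (R : realType) (n T : nat) (f0 f1 : R) (c0 c1 : 'I_n -> R)
    (I0 : 'I_n -> nat) (S : nat -> 'I_n -> nat) : R :=
  rcc_exp_cost f0 f1 c0 c1 S T 0 I0.

Definition rcc_bound (R : realType) (w : R) : R :=
  if w < (Num.sqrt 5 - 1) / 2 then 1 + 1 / (1 - w + 2 * Num.sqrt (1 - w))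
  else 1 + w.

(* Let [saving i] be [(c0 i - c1 i)^+] and, for the FDC
   inventories [a] of the policy and [o] of an offline plan, let
   [potential a o = \sum_i saving i * (o i - a i)^+], the savings the plan can
   still realise and the policy cannot.  In every period the expected cost of the
   policy plus the expected increase of the potential is at most
   [b = rcc_bound (f0 / f1)] times the cost of the plan; summing from
   [potential I0 I0 = 0] gives the theorem.  With [x] the saving of the FDC
   option and [p = p_rdc f0 f1], the per-period bound needs
   [(1 - p x) f1 <= (b - 1) (f0 + x)] when the plan serves the order from the RDC
   only, and [f0 + p x x + (1 - p x) f1 <= b f1] when it opens the FDC. *)

From mathcomp Require Import all_boot all_order all_algebra.
From mathcomp Require Import reals.
From mathcomp Require Import ring lra zify.
Set Implicit Arguments. Unset Strict Implicit. Unset Printing Implicit Defensive.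
Import Order.TTheory GRing.Theory Num.Theory.
Local Open Scope ring_scope.

Local Notation golden := ((Num.sqrt 5 - 1) / 2).

Section RccBound.
Variable R : realType.

Lemma golden_lt1 : golden < 1 :> R.
Proof.
have r0 : 0 <= Num.sqrt (5 : R) := sqrtr_ge0 _.
have r5 : Num.sqrt (5 : R) ^+ 2 = 5 by rewrite sqr_sqrtr.
have : Num.sqrt (5 : R) < 3 by rewrite ltNge; apply/negP => ?; nra.
lra.
Qed.

Lemma lt_golden (w : R) : 0 <= w -> w ^+ 2 + w < 1 -> w < golden.
Proof.
move=> w0 ww; rewrite ltr_pdivlMr // ltrBrDr.
have r0 : 0 <= Num.sqrt (5 : R) := sqrtr_ge0 _.
have r5 : Num.sqrt (5 : R) ^+ 2 = 5 by rewrite sqr_sqrtr.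
rewrite ltNge; apply/negP => hr; nra.
Qed.

(* With [w = f0 / f1] and [y = x / f1] this is the middle branch of [p_rdc]:
   [rcc_bound w - 1] is the maximum over [y] of [(y + w - 1) / (1 + (w + y) (y - 1))],
   attained at [y + w - 1 = sqrt (1 - w)]. *)
Lemma rcc_bound_gap (w y : R) : w < golden ->
  y + w - 1 <= (rcc_bound w - 1) * (1 + (w + y) * (y - 1)).
Proof.
move=> hw; rewrite /rcc_bound hw [X in _ <= X * _]addrAC subrr add0r mul1r.
have w1 : w < 1 := lt_trans hw golden_lt1.
set s := Num.sqrt (1 - w).
have s0 : 0 <= s := sqrtr_ge0 _.
have s2 : s ^+ 2 = 1 - w by rewrite sqr_sqrtr //; lra.
rewrite [_^-1 * _]mulrC ler_pdivlMr; last by lra.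
have -> : w = 1 - s ^+ 2 by lra.
have := sqr_ge0 (y - s ^+ 2 - s); nra.
Qed.

Lemma rcc_bound_ge (w : R) : 1 + w <= rcc_bound w.
Proof.
case: (ltP w golden) => hw; last by rewrite /rcc_bound ltNge hw.
have := rcc_bound_gap 1 hw; rewrite subrr mulr0 addr0 mulr1; lra.
Qed.

End RccBound.

Section RdcProbability.
Variable R : realType.
Variables f0 f1 : R.

Local Notation p := (p_rdc f0 f1).
Local Notation b := (rcc_bound (f0 / f1)).

Lemma p_rdc_small (x : R) : x <= f1 -> p x = 1.
Proof. by move=> hx; rewrite /p_rdc hx. Qed.

Lemma p_rdc_large (hf0 : 0 < f0) (x : R) : f1 < x -> p x =
  if f0 * (f0 + x) <= f1 ^+ 2 then
    (f1 ^+ 2 - (f0 + x) * f0) / (f1 ^+ 2 + (f0 + x) * (x - f1))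
  else 0.
Proof.
move=> hx; rewrite /p_rdc leNgt hx /= le_max leNgt hx /=.
by rewrite lerBrDr ler_pdivlMr // mulrC addrC.
Qed.

Lemma mulr_rcc_bound_ge (hf1 : 0 < f1) : f0 + f1 <= b * f1.
Proof.
have := ler_wpM2r (ltW hf1) (rcc_bound_ge (f0 / f1)).
by rewrite mulrDl mul1r divfK ?gt_eqF // addrC.
Qed.

Lemma rcc_bound_gap_scaled (hf1 : 0 < f1) (x : R) : f0 / f1 < golden ->
  f1 * (x + f0 - f1) <= (b - 1) * (f1 ^+ 2 + (f0 + x) * (x - f1)).
Proof.
move=> hw; have := ler_wpM2r (ltW (exprn_gt0 2 hf1)) (rcc_bound_gap (x / f1) hw).
have f1n0 : f1 != 0 by rewrite gt_eqF.
have -> : (x / f1 + f0 / f1 - 1) * f1 ^+ 2 = f1 * (x + f0 - f1) by field.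
rewrite -mulrA.
by have -> : (1 + (f0 / f1 + x / f1) * (x / f1 - 1)) * f1 ^+ 2
             = f1 ^+ 2 + (f0 + x) * (x - f1) by field.
Qed.

Lemma golden_of_mid (hf0 : 0 < f0) (hf1 : 0 < f1) (x : R) :
  f1 < x -> f0 * (f0 + x) <= f1 ^+ 2 -> f0 / f1 < golden.
Proof.
move=> hx hmid; apply: lt_golden; first by rewrite divr_ge0 // ltW.
rewrite -(ltr_pM2r (exprn_gt0 2 hf1)) mul1r.
have -> : ((f0 / f1) ^+ 2 + f0 / f1) * f1 ^+ 2 = f0 * (f0 + f1).
  by field; rewrite gt_eqF.
have : f0 * f1 < f0 * x by rewrite ltr_pM2l.
nra.
Qed.

Lemma p_rdc_mid_bounds (hf0 : 0 < f0) (hf1 : 0 < f1) (x : R) :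
  f1 < x -> f0 * (f0 + x) <= f1 ^+ 2 ->
  (1 - p x) * f1 <= (b - 1) * (f0 + x) /\ f0 + p x * (x - f1) <= (b - 1) * f1.
Proof.
move=> hx hmid; rewrite p_rdc_large // hmid.
set Dn := f1 ^+ 2 + (f0 + x) * (x - f1).
have Dn0 : 0 < Dn.
  by rewrite addr_gt0 ?exprn_gt0 // mulr_gt0 ?subr_gt0 //; lra.
set P := (f1 ^+ 2 - (f0 + x) * f0) / Dn.
have hP : P * Dn = f1 ^+ 2 - (f0 + x) * f0 by rewrite /P divfK ?gt_eqF.
have hgap := rcc_bound_gap_scaled hf1 x (golden_of_mid hf0 hf1 hx hmid).
have hrdc : (1 - P) * f1 <= (b - 1) * (f0 + x).
  rewrite -(ler_pM2r Dn0).
  have -> : (1 - P) * f1 * Dn = (f0 + x) * (f1 * (x + f0 - f1)).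
    by rewrite mulrAC mulrBl mul1r hP /Dn; ring.
  have -> : (b - 1) * (f0 + x) * Dn = (f0 + x) * ((b - 1) * Dn) by ring.
  by apply: ler_wpM2l => //; lra.
split=> //.
have fx0 : 0 < f0 + x by lra.
rewrite -(ler_pM2r fx0).
have -> : (f0 + P * (x - f1)) * (f0 + x) = (1 - P) * f1 * f1.
  apply/eqP; rewrite -subr_eq0.
  have -> : (f0 + P * (x - f1)) * (f0 + x) - (1 - P) * f1 * f1
            = P * Dn - (f1 ^+ 2 - (f0 + x) * f0) by rewrite /Dn; ring.
  by rewrite hP subrr.
by rewrite mulrAC [X in _ <= X]mulrAC ler_wpM2r // ltW.
Qed.

Lemma p_rdc_in01 (hf0 : 0 < f0) (hf1 : 0 < f1) (x : R) : 0 <= p x <= 1.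
Proof.
case: (lerP x f1) => hx; first by rewrite p_rdc_small // ler01 lexx.
rewrite p_rdc_large //; case: ifP => hmid; last by rewrite lexx ler01.
have Dn0 : 0 < f1 ^+ 2 + (f0 + x) * (x - f1).
  by rewrite addr_gt0 ?exprn_gt0 // mulr_gt0 ?subr_gt0 //; lra.
apply/andP; split; first by apply: divr_ge0; [lra | exact: ltW].
rewrite ler_pdivrMr // mul1r.
have : 0 <= (f0 + x) * (x - f1 + f0) by apply: mulr_ge0; lra.
nra.
Qed.

Lemma one_sub_p_rdc_le (hf0 : 0 < f0) (hf1 : 0 < f1) (x : R) : 0 <= x ->
  (1 - p x) * f1 <= (b - 1) * (f0 + x).
Proof.
move=> x0; have bw : f0 / f1 <= b - 1 by rewrite lerBrDl rcc_bound_ge.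
have w0 : 0 <= f0 / f1 by rewrite divr_ge0 ?ltW.
case: (lerP x f1) => hx.
  by rewrite p_rdc_small // subrr mul0r; apply: mulr_ge0; lra.
case: (boolP (f0 * (f0 + x) <= f1 ^+ 2)) => hmid.
  by case: (p_rdc_mid_bounds hf0 hf1 hx hmid).
rewrite p_rdc_large // ifN // subr0 mul1r.
have : f1 < f0 / f1 * (f0 + x).
  rewrite -(ltr_pM2r hf1) mulrAC divfK ?gt_eqF //; rewrite -ltNge in hmid; nra.
have : f0 / f1 * (f0 + x) <= (b - 1) * (f0 + x) by rewrite ler_wpM2r //; lra.
lra.
Qed.

Lemma p_rdc_mix_le (hf0 : 0 < f0) (hf1 : 0 < f1) (x : R) :
  f0 + p x * x + (1 - p x) * f1 <= b * f1.
Proof.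
have hb := mulr_rcc_bound_ge hf1.
case: (lerP x f1) => hx; first by rewrite p_rdc_small //; lra.
case: (boolP (f0 * (f0 + x) <= f1 ^+ 2)) => hmid.
  by case: (p_rdc_mid_bounds hf0 hf1 hx hmid) => _; lra.
by rewrite p_rdc_large // ifN //; lra.
Qed.

(* [F1], [FA], [FO]: fixed costs of the policy's RDC option, of its split option
   and of the plan; [D]: lower bound on the plan's variable cost; [M]: savings of
   the plan not accounted for by the potential. *)
Lemma p_rdc_mix_cost_le (hf0 : 0 < f0) (hf1 : 0 < f1) (x D M F1 FA FO : R) :
  0 <= x -> 0 <= D -> 0 <= M -> M <= x -> F1 <= f0 -> FA <= F1 + f1 ->
  x = 0 \/ F1 = f0 -> 0 <= FO ->
  f1 <= FO \/ [/\ M = 0, x <= D & F1 <= FO] ->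
  p x * (F1 + D + M) + (1 - p x) * (FA + D) <= b * (FO + D).
Proof.
move=> x0 D0 M0 Mx F1f0 FAF1 x0F1 FO0 hopt.
have /andP[p0 p1] := p_rdc_in01 hf0 hf1 x.
have b1 : 1 <= b.
  have : 0 <= f0 / f1 by rewrite divr_ge0 ?ltW.
  have := rcc_bound_ge (f0 / f1); lra.
have bD : D <= b * D by rewrite ler_peMl.
have hFA : (1 - p x) * FA <= (1 - p x) * (F1 + f1) by rewrite ler_wpM2l // subr_ge0.
case: hopt => [f1FO | [M_0 xD F1FO]].
  have := p_rdc_mix_le hf0 hf1 x.
  have : p x * M <= p x * x by rewrite ler_wpM2l.
  have : b * f1 <= b * FO by rewrite ler_wpM2l //; lra.
  lra.
rewrite M_0; case: x0F1 => [x_0 | F1_f0].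
  rewrite x_0 p_rdc_small ?subrr ?mul0r ?addr0 ?mul1r; last exact: ltW.
  have : FO + D <= b * (FO + D) by rewrite ler_peMl //; lra.
  lra.
have := one_sub_p_rdc_le hf0 hf1 x0.
have : (b - 1) * (f0 + x) <= (b - 1) * (FO + D) by rewrite ler_wpM2l //; lra.
lra.
Qed.

End RdcProbability.

Lemma feasible_plan_head n k (o : 'I_n -> nat) S m1 :
  feasible_plan k.+1 o S m1 ->
  (forall i, m1 0%N i <= S 0%N i)%N /\ (forall i, m1 0%N i <= o i)%N.
Proof.
move=> hfeas; split=> i; have [hS hI] := hfeas 0%N i isT => //.
by rewrite big_ord0 addn0 in hI.
Qed.

Lemma feasible_plan_behead n k (o : 'I_n -> nat) S m1 :
  feasible_plan k.+1 o S m1 ->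
  feasible_plan k (fun i => o i - m1 0%N i)%N (fun t => S t.+1) (fun t => m1 t.+1).
Proof.
move=> hfeas t i ht; have [hS ho] := hfeas t.+1 i ht.
have e : (\sum_(s < t.+1) m1 s i = m1 0%N i + \sum_(s < t) m1 s.+1 i)%N.
  by rewrite big_ord_recl.
by rewrite e in ho; split=> //; lia.
Qed.

Lemma plan_cost_recl (R : realType) n k (f0 f1 : R) (c0 c1 : 'I_n -> R) S m1 :
  plan_cost k.+1 f0 f1 c0 c1 S m1
  = period_cost f0 f1 c0 c1 (fun i => S 0%N i - m1 0%N i)%N (m1 0%N)
    + plan_cost k f0 f1 c0 c1 (fun t => S t.+1) (fun t => m1 t.+1).
Proof. by rewrite /plan_cost big_ord_recl. Qed.

Section Amortized.
Variable R : realType.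
Variables (f0 f1 : R) (n : nat) (c0 c1 : 'I_n -> R).
Hypotheses (hc0 : forall i, 0 <= c0 i) (hc1 : forall i, 0 <= c1 i).

Definition saving i : R := if c1 i < c0 i then c0 i - c1 i else 0.

Definition potential (a o : 'I_n -> nat) : R :=
  \sum_(i < n) saving i * (o i - a i)%:R.

Definition fdc_share (s a : 'I_n -> nat) i : nat :=
  if c1 i < c0 i then minn (s i) (a i) else 0.

Definition fixed_cost (m0 m1 : 'I_n -> nat) : R :=
  (if (0 < \sum_(i < n) m0 i)%N then f0 else 0)
  + (if (0 < \sum_(i < n) m1 i)%N then f1 else 0).

Definition var_cost (m0 m1 : 'I_n -> nat) : R :=
  \sum_(i < n) c0 i * (m0 i)%:R + \sum_(i < n) c1 i * (m1 i)%:R.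

Lemma period_costE m0 m1 :
  period_cost f0 f1 c0 c1 m0 m1 = fixed_cost m0 m1 + var_cost m0 m1.
Proof. by rewrite /period_cost addrACA. Qed.

Lemma saving_ge0 i : 0 <= saving i.
Proof. by rewrite /saving; case: ifP => // /ltW; rewrite subr_ge0. Qed.

Lemma saving_le_c0 i : saving i <= c0 i.
Proof. by rewrite /saving; case: ifP => _; rewrite ?lerBlDr ?lerDl ?hc0 ?hc1. Qed.

Lemma sub_le_saving i : c0 i - c1 i <= saving i.
Proof. by rewrite /saving; case: ltP => // h; rewrite subr_le0. Qed.

Lemma fdc_share_le s a i : (fdc_share s a i <= s i)%N.
Proof. by rewrite /fdc_share; case: ifP; rewrite ?geq_minl. Qed.

Lemma gain_fdc_share s a :
  \sum_(i < n) (c0 i - c1 i) * (fdc_share s a i)%:R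
  = \sum_(i < n) saving i * (fdc_share s a i)%:R.
Proof.
by apply: eq_bigr => i _; rewrite /saving /fdc_share; case: ifP; rewrite ?mulr0.
Qed.

Lemma var_cost_rdc s : var_cost s (fun=> 0%N) = \sum_(i < n) c0 i * (s i)%:R.
Proof. by rewrite /var_cost [X in _ + X]big1 ?addr0 // => i _; rewrite mulr0. Qed.

Lemma var_cost_split s z : (forall i, z i <= s i)%N ->
  var_cost (fun i => s i - z i)%N z
  = \sum_(i < n) c0 i * (s i)%:R - \sum_(i < n) (c0 i - c1 i) * (z i)%:R.
Proof.
move=> hzs; rewrite /var_cost -sumrB -big_split /=.
by apply: eq_bigr => i _; rewrite natrB //; ring.
Qed.

Lemma potential_rdc_step a o z : (forall i, z i <= o i)%N ->
  potential a (fun i => o i - z i)%N + \sum_(i < n) saving i * (z i)%:R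
  = potential a o + \sum_(i < n) saving i * (z i - (o i - a i))%:R.
Proof.
move=> hzo; rewrite /potential -!big_split /=; apply: eq_bigr => i _.
by rewrite -!mulrDr -!natrD; congr (_ * _%:R); have := hzo i; lia.
Qed.

Lemma potential_fdc_step s a o z :
  (forall i, z i <= s i)%N -> (forall i, z i <= o i)%N ->
  potential (fun i => a i - fdc_share s a i)%N (fun i => o i - z i)%N
    + \sum_(i < n) saving i * (z i)%:R
  <= potential a o + \sum_(i < n) saving i * (fdc_share s a i)%:R.
Proof.
move=> hzs hzo; rewrite /potential -!big_split /=; apply: ler_sum => i _.
rewrite -!mulrDr -!natrD /fdc_share /saving; case: ifP => hc; last by rewrite !mul0r.
apply: ler_wpM2l; first by rewrite subr_ge0 ltW.
by rewrite ler_nat; have := hzs i; have := hzo i; lia.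
Qed.

Lemma excess_le_fdc_gain s a o z :
  (forall i, z i <= s i)%N -> (forall i, z i <= o i)%N ->
  \sum_(i < n) saving i * (z i - (o i - a i))%:R
  <= \sum_(i < n) saving i * (fdc_share s a i)%:R.
Proof.
move=> hzs hzo; apply: ler_sum => i _; rewrite /fdc_share /saving.
case: ifP => hc; last by rewrite !mul0r.
apply: ler_wpM2l; first by rewrite subr_ge0 ltW.
by rewrite ler_nat; have := hzs i; have := hzo i; lia.
Qed.

Lemma opt_var_cost_ge s z : (forall i, z i <= s i)%N ->
  \sum_(i < n) c0 i * (s i)%:R - \sum_(i < n) saving i * (z i)%:R
  <= var_cost (fun i => s i - z i)%N z.
Proof.
move=> hzs; rewrite var_cost_split // lerD2l lerN2.
by apply: ler_sum => i _; apply: ler_wpM2r => //; exact: sub_le_saving.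
Qed.

Lemma saving_sum_le s z : (forall i, z i <= s i)%N ->
  \sum_(i < n) saving i * (z i)%:R <= \sum_(i < n) c0 i * (s i)%:R.
Proof.
move=> hzs; apply: ler_sum => i _.
by apply: ler_pM; rewrite ?saving_ge0 ?saving_le_c0 ?ler_nat.
Qed.

Lemma fixed_cost_ge0 (hf0 : 0 <= f0) (hf1 : 0 <= f1) m0 m1 : 0 <= fixed_cost m0 m1.
Proof. by rewrite /fixed_cost; do 2 case: ifP => _; lra. Qed.

Lemma fixed_cost_rdc (s : 'I_n -> nat) :
  fixed_cost s (fun=> 0%N) = if (0 < \sum_(i < n) s i)%N then f0 else 0.
Proof. by rewrite /fixed_cost big1_eq /= addr0. Qed.

Lemma fixed_cost_split_le (hf0 : 0 <= f0) (hf1 : 0 <= f1) s y :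
  (forall i, y i <= s i)%N ->
  fixed_cost (fun i => s i - y i)%N y <= fixed_cost s (fun=> 0%N) + f1.
Proof.
move=> hys; rewrite fixed_cost_rdc /fixed_cost.
case: (posnP (\sum_(i < n) s i)) => hs; last by do 2 case: ifP => _; lra.
have : (\sum_(i < n) y i <= \sum_(i < n) s i)%N by apply: leq_sum => i _.
have : (\sum_(i < n) (s i - y i) <= \sum_(i < n) s i)%N.
  by apply: leq_sum => i _; exact: leq_subr.
by rewrite hs !leqn0 => /eqP -> /eqP -> /=; lra.
Qed.

Lemma fdc_gain_eq0_or_fixed_cost s a :
  \sum_(i < n) saving i * (fdc_share s a i)%:R = 0
  \/ fixed_cost s (fun=> 0%N) = f0.
Proof.
rewrite fixed_cost_rdc; case: (posnP (\sum_(i < n) s i)) => hs; [left | by right].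
move/eqP: hs; rewrite sum_nat_eq0 => /forallP hs.
by rewrite big1 // => i _; rewrite /fdc_share (eqP (hs i)) min0n if_same mulr0.
Qed.

Lemma opt_fixed_cost_cases (hf0 : 0 <= f0) s a o z : (forall i, z i <= s i)%N ->
  f1 <= fixed_cost (fun i => s i - z i)%N z
  \/ [/\ \sum_(i < n) saving i * (z i - (o i - a i))%:R = 0,
         \sum_(i < n) saving i * (fdc_share s a i)%:R
           <= \sum_(i < n) c0 i * (s i)%:R - \sum_(i < n) saving i * (z i)%:R
       & fixed_cost s (fun=> 0%N) <= fixed_cost (fun i => s i - z i)%N z].
Proof.
move=> hzs; case: (posnP (\sum_(i < n) z i)) => hz; last first.
  by left; rewrite /fixed_cost hz; case: ifP => _; lra.
move/eqP: (hz); rewrite sum_nat_eq0 => /forallP hz0.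
have z_0 i : z i = 0%N by apply/eqP/hz0.
right; split.
- by rewrite big1 // => i _; rewrite z_0 mulr0.
- rewrite [X in _ - X]big1 ?subr0 => [|i _]; last by rewrite z_0 mulr0.
  exact/saving_sum_le/fdc_share_le.
- rewrite fixed_cost_rdc /fixed_cost hz addr0.
  have -> : (\sum_(i < n) (s i - z i) = \sum_(i < n) s i)%N.
    by apply: eq_bigr => i _; rewrite z_0 subn0.
  by [].
Qed.

Definition rcc_mix (s a : 'I_n -> nat) (rest_rdc rest_fdc : R) : R :=
  let y := fdc_share s a in
  let q := p_rdc f0 f1 (\sum_(i < n) (c0 i - c1 i) * (y i)%:R) in
  q * (period_cost f0 f1 c0 c1 s (fun=> 0%N) + rest_rdc)
  + (1 - q) * (period_cost f0 f1 c0 c1 (fun i => s i - y i)%N y + rest_fdc).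

Lemma amortized_period_le (hf0 : 0 < f0) (hf1 : 0 < f1) s a o z :
  (forall i, z i <= s i)%N -> (forall i, z i <= o i)%N ->
  rcc_mix s a (potential a (fun i => o i - z i)%N)
    (potential (fun i => a i - fdc_share s a i)%N (fun i => o i - z i)%N)
  <= rcc_bound (f0 / f1) * period_cost f0 f1 c0 c1 (fun i => s i - z i)%N z
     + potential a o.
Proof.
move=> hzs hzo; rewrite /rcc_mix; set y := fdc_share s a.
have hys := fdc_share_le s a.
rewrite !period_costE var_cost_rdc var_cost_split // !gain_fdc_share.
set x := \sum_(i < n) saving i * (y i)%:R; set q := p_rdc f0 f1 x.
set B := \sum_(i < n) c0 i * (s i)%:R.
set Z := \sum_(i < n) saving i * (z i)%:R.
set M := \sum_(i < n) saving i * (z i - (o i - a i))%:R.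
set F1 := fixed_cost s _; set FA := fixed_cost _ y; set FO := fixed_cost _ z.
set b := rcc_bound _; set P := potential a o.
have hrdc := potential_rdc_step a hzo; rewrite -/Z -/M -/P in hrdc.
have hfdc := potential_fdc_step a hzs hzo; rewrite -/y -/Z -/x -/P in hfdc.
have hopt := opt_var_cost_ge hzs; rewrite -/B -/Z in hopt.
have /andP[q0 q1] := p_rdc_in01 hf0 hf1 x.
have b0 : 0 <= b by apply: le_trans (rcc_bound_ge _); rewrite addr_ge0 ?divr_ge0 ?ltW.
have core : q * (F1 + (B - Z) + M) + (1 - q) * (FA + (B - Z)) <= b * (FO + (B - Z)).
  apply: p_rdc_mix_cost_le => //.
  - by apply: sumr_ge0 => i _; rewrite mulr_ge0 ?saving_ge0.
  - by rewrite subr_ge0 saving_sum_le.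
  - by apply: sumr_ge0 => i _; rewrite mulr_ge0 ?saving_ge0.
  - exact: excess_le_fdc_gain.
  - by rewrite /F1 fixed_cost_rdc; case: ifP => _; lra.
  - by apply: fixed_cost_split_le; rewrite ?ltW.
  - exact: fdc_gain_eq0_or_fixed_cost.
  - by apply: fixed_cost_ge0; rewrite ltW.
  - by apply: opt_fixed_cost_cases; rewrite ?ltW.
have : (1 - q) * (potential (fun i => a i - y i)%N (fun i => o i - z i)%N)
       <= (1 - q) * (P + x - Z) by rewrite ler_wpM2l ?subr_ge0 //; lra.
have : b * (FO + (B - Z)) <= b * (FO + var_cost (fun i => s i - z i)%N z).
  by rewrite ler_wpM2l // lerD2l.
have -> : potential a (fun i => o i - z i)%N = P + M - Z by lra.
lra.
Qed.

Lemma potential_ge0 a o : 0 <= potential a o.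
Proof. by apply: sumr_ge0 => i _; rewrite mulr_ge0 ?saving_ge0. Qed.

Lemma potential_id a : potential a a = 0.
Proof. by rewrite /potential big1 // => i _; rewrite subnn mulr0. Qed.

Lemma rcc_mix_le (hf0 : 0 < f0) (hf1 : 0 < f1) s a r1 r2 r1' r2' :
  r1 <= r1' -> r2 <= r2' -> rcc_mix s a r1 r2 <= rcc_mix s a r1' r2'.
Proof.
move=> h1 h2; have /andP[q0 q1] := p_rdc_in01 hf0 hf1
  (\sum_(i < n) (c0 i - c1 i) * (fdc_share s a i)%:R).
by rewrite lerD // ler_wpM2l ?subr_ge0 // lerD2l.
Qed.

Lemma rcc_mixDl s a d r1 r2 :
  rcc_mix s a (d + r1) (d + r2) = d + rcc_mix s a r1 r2.
Proof. by rewrite /rcc_mix; ring. Qed.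

Lemma rcc_exp_costS S k t a :
  rcc_exp_cost f0 f1 c0 c1 S k.+1 t a
  = rcc_mix (S t) a (rcc_exp_cost f0 f1 c0 c1 S k t.+1 a)
      (rcc_exp_cost f0 f1 c0 c1 S k t.+1 (fun i => a i - fdc_share (S t) a i)%N).
Proof. by []. Qed.

Lemma rcc_exp_cost_shift S k t a :
  rcc_exp_cost f0 f1 c0 c1 S k t.+1 a
  = rcc_exp_cost f0 f1 c0 c1 (fun t => S t.+1) k t a.
Proof. by elim: k t a => // k IH t a; rewrite !rcc_exp_costS !IH. Qed.

Lemma rcc_exp_cost_le_plan (hf0 : 0 < f0) (hf1 : 0 < f1) k S m1 a o :
  feasible_plan k o S m1 ->
  rcc_exp_cost f0 f1 c0 c1 S k 0 a
  <= rcc_bound (f0 / f1) * plan_cost k f0 f1 c0 c1 S m1 + potential a o.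
Proof.
elim: k S m1 a o => [|k IH] S m1 a o hfeas.
  by rewrite /plan_cost big_ord0 mulr0 add0r potential_ge0.
have [hzs hzo] := feasible_plan_head hfeas.
have IHtail := IH _ _ _ _ (feasible_plan_behead hfeas).
rewrite rcc_exp_costS !rcc_exp_cost_shift plan_cost_recl.
apply: le_trans (rcc_mix_le hf0 hf1 _ _ (IHtail a) (IHtail _)) _.
have := amortized_period_le hf0 hf1 a hzs hzo.
by rewrite rcc_mixDl => hstep; rewrite mulrDr; lra.
Qed.

End Amortized.

Theorem theorem8 (R : realType) (f0 f1 : R) (hf0 : 0 < f0) (hf1 : 0 < f1)
    (n T : nat) (I0 : 'I_n -> nat) (c0 c1 : 'I_n -> R)
    (hc0 : forall i, 0 <= c0 i) (hc1 : forall i, 0 <= c1 i)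
    (S : nat -> 'I_n -> nat) (m1 : nat -> 'I_n -> nat)
    (hm1 : feasible_plan T I0 S m1) :
  rcc_alg T f0 f1 c0 c1 I0 S <= rcc_bound (f0 / f1) * plan_cost T f0 f1 c0 c1 S m1.
Proof.
have := rcc_exp_cost_le_plan hc0 hc1 hf0 hf1 I0 hm1.
by rewrite potential_id addr0.
Qed.
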